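(* There is an absolute constant $C>0$ such that the following holds. Let $p$ be a prime and $n:=p^3$. Let $s_0,\dots,s_{n-1}\in[0,1)$ be such that $Q_{0,3}(x)=\sum_{j=0}^{n-1}e^{2\pi\imath s_j}x^j$. Then for every $t\in\mathbb{R}$, $$B(s_0,\,s_1+t,\,s_2+2t,\dots,s_{n-1}+(n-1)t)\ \le\ C\,n^{2/3}\log n.$$
   Context: Fix a prime $p$ and a primitive $p$-th root of unity $\xi$. Let $D$ be the $p\times p$ matrix $D_{j,l}=\xi^{jl}$, $j,l\in\{0,\dots,p-1\}$. Define polynomials $Q_{0,r},\dots,Q_{p-1,r}\in\mathbb{C}[x]$ recursively: $Q_{j,0}:=1$ for all $j$, and for $r\ge0$, $$(Q_{0,r+1},\dots,Q_{p-1,r+1})^T:=D\cdot\big(Q_{0,r},\,x^{p^r}Q_{1,r},\dots,x^{(p-1)p^r}Q_{p-1,r}\big)^T.$$ $Q_{0,3}$ has degree $p^3-1$ and all coefficients of absolute value $1$. For $r\in\mathbb{R}$, $\{r\}:=r-\lfloor r\rfloor$; the bias of $r_1,\dots,r_N$ is $B(r_1,\dots,r_N):=\sup_{0\le a\le b\le1}\big|\,|\{i:\{r_i\}\in[a,b]\}|-N(b-a)\big|$. *)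

From Stdlib Require Import Reals Lra Lia ZArith Arith List Znumtheory.
Open Scope R_scope.

Definition cpx : Type := (R * R)%type.
Definition c0 : cpx := (0, 0).
Definition c1 : cpx := (1, 0).
Definition cadd (z w : cpx) : cpx := (fst z + fst w, snd z + snd w).
Definition cmul (z w : cpx) : cpx :=
  (fst z * fst w - snd z * snd w, fst z * snd w + snd z * fst w).
Fixpoint cpow (z : cpx) (k : nat) : cpx :=
  match k with O => c1 | S k' => cmul z (cpow z k') end.
Fixpoint csum (n : nat) (f : nat -> cpx) : cpx :=
  match n with O => c0 | S n' => cadd (csum n' f) (f n') end.

Definition cexp2pi (s : R) : cpx := (cos (2 * PI * s), sin (2 * PI * s)).

Definition primitive_root (p : nat) (xi : cpx) : Prop :=
  cpow xi p = c1 /\ (forall k : nat, (0 < k < p)%nat -> cpow xi k <> c1).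

(* Qcoef p xi r j m = coefficient of x^m in Q_{j,r}, where
   Q_{j,0} = 1 and Q_{j,r+1}(x) = sum_{l<p} xi^{j l} x^{l p^r} Q_{l,r}(x),
   i.e. (Q_{.,r+1}) = D . (Q_{0,r}, x^{p^r} Q_{1,r}, ..., x^{(p-1)p^r} Q_{p-1,r}). *)
Fixpoint Qcoef (p : nat) (xi : cpx) (r : nat) (j : nat) (m : nat) : cpx :=
  match r with
  | O => if Nat.eqb m 0 then c1 else c0
  | S r' =>
      csum p (fun l =>
        cmul (cpow xi (j * l))
             (if Nat.leb (l * p ^ r') m then Qcoef p xi r' l (m - l * p ^ r') else c0))
  end.

Definition fracR (x : R) : R := x - IZR (Int_part x).

Definition count_in (r : nat -> R) (N : nat) (a b : R) : nat :=
  length (filter (fun i => if Rle_dec a (fracR (r i)) then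
                             if Rle_dec (fracR (r i)) b then true else false
                           else false) (seq 0 N)).

(* B(r_0,...,r_{N-1}) <= X, i.e. the supremum defining the bias is at most X:
   every element of the set being sup'ed is <= X. *)
Definition bias_le (r : nat -> R) (N : nat) (X : R) : Prop :=
  forall a b : R, 0 <= a -> a <= b -> b <= 1 ->
    Rabs (INR (count_in r N a b) - INR N * (b - a)) <= X.

From Pilot Require Import Defs.
From Stdlib Require Import Reals Lra Lia ZArith Znumtheory List.
From Coquelicot Require Import Coquelicot.
Open Scope R_scope.

(* The coefficient of [x^(l0 + p l1 + p^2 l2)] in [Q_{0,3}] is [xi^(l2 l1 + l1 l0)], so
   [s_i = alpha l1 (l0 + l2) / p] modulo 1 with [p] not dividing [alpha]. Replacing [t] by a
   rational with denominator [L = n^2] moves every point by at most [p n / M], [M = p L],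
   and makes [M (s_i + i t)] an integer [Y_i]; the bias is then controlled by counting the
   [Y_i] in windows of residues modulo [M]. Expanding the indicator of [M | m] in additive
   characters, the frequencies divisible by [p] reproduce the (trivial) count modulo [L],
   which is off by at most [n / p = p^2]. For the other frequencies [h], the sum of
   [e(h Y_i / M)] over the digits of [i] has a phase that is linear in [l0] and [l2] for
   fixed [l1]; by AM-GM and orthogonality its modulus is at most [p^2]. The window sums are
   geometric, and summing their bounds over [h] costs a factor [log M]. *)

(** * Finite sums *)

Fixpoint rsum (n : nat) (f : nat -> R) : R :=
  match n with O => 0 | S k => rsum k f + f k end.

(* [csum] and [cexp2pi] from the definitions, typed at Coquelicot's [C] rather than at
   [cpx], so that [ring] and the lemmas on [C] apply to them. *)
Definition sumC (n : nat) (f : nat -> C) : C := csum n f.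
Definition e (x : R) : C := cexp2pi x.

Lemma sumC_0 f : sumC 0 f = 0%C.
Proof. reflexivity. Qed.

Lemma sumC_S n (f : nat -> C) : sumC (S n) f = (sumC n f + f n)%C.
Proof. reflexivity. Qed.

Lemma sumC_ext n (f g : nat -> C) : (forall i, (i < n)%nat -> f i = g i) -> sumC n f = sumC n g.
Proof.
  induction n as [|n IH]; intros Hfg; [reflexivity|].
  rewrite !sumC_S, IH, Hfg by (lia || (intros; apply Hfg; lia)); reflexivity.
Qed.

Lemma rsum_ext n (f g : nat -> R) : (forall i, (i < n)%nat -> f i = g i) -> rsum n f = rsum n g.
Proof.
  induction n as [|n IH]; intros Hfg; [reflexivity|]; simpl.
  rewrite IH, Hfg by (lia || (intros; apply Hfg; lia)); reflexivity.
Qed.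

Lemma sumC_plus n (f g : nat -> C) : sumC n (fun i => f i + g i)%C = (sumC n f + sumC n g)%C.
Proof.
  induction n as [|n IH]; [apply injective_projections; simpl; lra|].
  rewrite !sumC_S, IH; ring.
Qed.

Lemma rsum_plus n (f g : nat -> R) : rsum n (fun i => f i + g i) = rsum n f + rsum n g.
Proof. induction n as [|n IH]; simpl; [lra|]. rewrite IH; ring. Qed.

Lemma sumC_scal_l n (c : C) (f : nat -> C) : (c * sumC n f)%C = sumC n (fun i => c * f i)%C.
Proof.
  induction n as [|n IH]; [apply injective_projections; simpl; lra|].
  rewrite !sumC_S, <- IH; ring.
Qed.

Lemma rsum_scal_l n (c : R) (f : nat -> R) : c * rsum n f = rsum n (fun i => c * f i).
Proof. induction n as [|n IH]; simpl; [lra|]. rewrite <- IH; ring. Qed.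

Lemma sumC_eq0 n (f : nat -> C) : (forall i, (i < n)%nat -> f i = 0%C) -> sumC n f = 0%C.
Proof.
  induction n as [|n IH]; intros Hf; [reflexivity|].
  rewrite sumC_S, IH, Hf by (lia || (intros; apply Hf; lia)); ring.
Qed.

Lemma rsum_eq0 n (f : nat -> R) : (forall i, (i < n)%nat -> f i = 0) -> rsum n f = 0.
Proof.
  induction n as [|n IH]; intros Hf; simpl; [reflexivity|].
  rewrite IH, Hf by (lia || (intros; apply Hf; lia)); lra.
Qed.

Lemma sumC_swap n m (f : nat -> nat -> C) :
  sumC n (fun i => sumC m (f i)) = sumC m (fun j => sumC n (fun i => f i j)).
Proof.
  induction n as [|n IH]; [symmetry; apply sumC_eq0; reflexivity|].
  rewrite sumC_S, IH, <- sumC_plus; reflexivity.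
Qed.

Lemma sumC_app n m (f : nat -> C) : sumC (n + m) f = (sumC n f + sumC m (fun k => f (n + k)%nat))%C.
Proof.
  induction m as [|m IH].
  - rewrite Nat.add_0_r; apply injective_projections; simpl; lra.
  - rewrite Nat.add_succ_r, !sumC_S, IH; ring.
Qed.

Lemma rsum_app n m (f : nat -> R) : rsum (n + m) f = rsum n f + rsum m (fun k => f (n + k)%nat).
Proof.
  induction m as [|m IH]; simpl.
  - rewrite Nat.add_0_r; lra.
  - rewrite Nat.add_succ_r; simpl; rewrite IH; ring.
Qed.

Lemma sumC_mul_range p m (f : nat -> C) :
  sumC (p * m) f = sumC m (fun q => sumC p (fun r => f (r + p * q)%nat)).
Proof.
  induction m as [|m IH]; [rewrite Nat.mul_0_r; reflexivity|].
  rewrite Nat.mul_succ_r, sumC_app, IH, sumC_S; f_equal.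
  apply sumC_ext; intros; f_equal; lia.
Qed.

Lemma sumC_mult n m (f g : nat -> C) :
  (sumC n f * sumC m g)%C = sumC n (fun i => sumC m (fun j => f i * g j))%C.
Proof.
  rewrite Cmult_comm, sumC_scal_l; apply sumC_ext; intros.
  rewrite Cmult_comm, sumC_scal_l; reflexivity.
Qed.

Lemma sumC_conj n (f : nat -> C) : Cconj (sumC n f) = sumC n (fun i => Cconj (f i)).
Proof.
  induction n as [|n IH]; [apply injective_projections; simpl; lra|].
  rewrite !sumC_S, <- IH; apply injective_projections; simpl; lra.
Qed.

Lemma sumC_RtoC n (f : nat -> R) : sumC n (fun i => RtoC (f i)) = RtoC (rsum n f).
Proof.
  induction n as [|n IH]; [reflexivity|].
  rewrite sumC_S, IH; apply injective_projections; simpl; lra.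
Qed.

Lemma sumC_delta n l (f : nat -> C) : (l < n)%nat ->
  sumC n (fun j => if Nat.eqb l j then f j else 0%C) = f l.
Proof.
  induction n as [|n IH]; intros Hl; [lia|]; rewrite sumC_S.
  destruct (Nat.eq_dec l n) as [->|Hln].
  - rewrite Nat.eqb_refl, sumC_eq0; [ring|].
    intros i Hi; destruct (Nat.eqb_spec n i); [lia|reflexivity].
  - rewrite IH by lia; destruct (Nat.eqb_spec l n); [lia|ring].
Qed.

Lemma Cmod_sumC n (f : nat -> C) : Cmod (sumC n f) <= rsum n (fun i => Cmod (f i)).
Proof.
  induction n as [|n IH]; simpl rsum; [rewrite sumC_0, Cmod_0; lra|].
  rewrite sumC_S; eapply Rle_trans; [apply Cmod_triangle|lra].
Qed.

Lemma rsum_le n (f g : nat -> R) : (forall i, (i < n)%nat -> f i <= g i) -> rsum n f <= rsum n g.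
Proof.
  induction n as [|n IH]; intros Hfg; simpl; [lra|].
  apply Rplus_le_compat; [apply IH; intros; apply Hfg; lia|apply Hfg; lia].
Qed.

Lemma rsum_const n (c : R) : rsum n (fun _ => c) = INR n * c.
Proof. induction n as [|n IH]; simpl rsum; [simpl; lra|]. rewrite IH, S_INR; ring. Qed.

Lemma rsum_nonneg n (f : nat -> R) : (forall i, (i < n)%nat -> 0 <= f i) -> 0 <= rsum n f.
Proof. intros Hf; rewrite <- (Rmult_0_r (INR n)), <- rsum_const; apply rsum_le, Hf. Qed.

Lemma rsum_term_le n (f : nat -> R) k :
  (forall i, (i < n)%nat -> 0 <= f i) -> (k < n)%nat -> f k <= rsum n f.
Proof.
  induction n as [|n IH]; intros Hf Hk; [lia|]; simpl.
  assert (0 <= rsum n f) by (apply rsum_nonneg; intros; apply Hf; lia).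
  destruct (Nat.eq_dec k n) as [->|Hkn]; [lra|].
  assert (f k <= rsum n f) by (apply IH; [intros; apply Hf|]; lia).
  specialize (Hf n (Nat.lt_succ_diag_r n)); lra.
Qed.

Lemma rsum_rev n (f : nat -> R) : rsum n (fun i => f (n - 1 - i)%nat) = rsum n f.
Proof.
  revert f; induction n as [|n IH]; intros f; [reflexivity|].
  change (rsum (S n) f) with (rsum (1 + n) f).
  rewrite rsum_app, <- (IH (fun j => f (1 + j)%nat)); cbn [rsum].
  replace (S n - 1 - n)%nat with 0%nat by lia.
  rewrite Rplus_0_l, Rplus_comm; f_equal; apply rsum_ext; intros; f_equal; lia.
Qed.

(** * The additive character [e] *)

Lemma e_add x y : e (x + y) = (e x * e y)%C.
Proof.
  unfold e, cexp2pi, Cmult; simpl.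
  replace (2 * PI * (x + y)) with (2 * PI * x + 2 * PI * y) by ring.
  rewrite cos_plus, sin_plus; f_equal; ring.
Qed.

Lemma e_0 : e 0 = 1%C.
Proof. unfold e, cexp2pi; rewrite Rmult_0_r, cos_0, sin_0; reflexivity. Qed.

Lemma e_opp x : e (- x) = Cconj (e x).
Proof.
  unfold e, cexp2pi, Cconj; simpl.
  replace (2 * PI * - x) with (- (2 * PI * x)) by ring.
  rewrite cos_neg, sin_neg; reflexivity.
Qed.

Lemma e_mul_conj x : (e x * Cconj (e x))%C = 1%C.
Proof. rewrite <- e_opp, <- e_add, Rplus_opp_r; apply e_0. Qed.

Lemma Cmod_e x : Cmod (e x) = 1.
Proof.
  unfold Cmod, e, cexp2pi; cbn [fst snd].
  pose proof (sin2_cos2 (2 * PI * x)) as Hpyth; unfold Rsqr in Hpyth.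
  replace (cos (2 * PI * x) ^ 2 + sin (2 * PI * x) ^ 2) with 1 by (simpl; lra).
  apply sqrt_1.
Qed.

Lemma e_INR n : e (INR n) = 1%C.
Proof.
  induction n as [|n IH]; [apply e_0|].
  rewrite S_INR, e_add, IH; unfold e, cexp2pi.
  rewrite Rmult_1_r, cos_2PI, sin_2PI; apply injective_projections; simpl; lra.
Qed.

Lemma e_IZR z : e (IZR z) = 1%C.
Proof.
  destruct (Z_le_gt_dec 0 z).
  - rewrite <- (Z2Nat.id z), <- INR_IZR_INZ by lia; apply e_INR.
  - replace z with (- Z.of_nat (Z.to_nat (- z)))%Z by lia.
    rewrite opp_IZR, <- INR_IZR_INZ, e_opp, e_INR.
    apply injective_projections; simpl; lra.
Qed.

Lemma e_pow x n : Cpow (e x) n = e (INR n * x).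
Proof.
  induction n as [|n IH]; [rewrite Rmult_0_l, e_0; reflexivity|].
  rewrite Cpow_S, IH, <- e_add, S_INR; f_equal; ring.
Qed.

Lemma e_eq1 x : e x = 1%C -> exists z, x = IZR z.
Proof.
  intros Hx; exists (Int_part x).
  destruct (base_Int_part x) as [Hfl Hfu].
  set (f := x - IZR (Int_part x)).
  assert (Hef : e f = 1%C).
  { unfold f, Rminus; rewrite e_add, e_opp, e_IZR, Hx.
    apply injective_projections; simpl; lra. }
  destruct (Req_dec f 0) as [Hf0|Hf0]; [unfold f in Hf0; lra|].
  assert (Hsin : 0 < sin (PI * f)).
  { pose proof PI_RGT_0; apply sin_gt_0; unfold f in *; nra. }
  unfold e, cexp2pi in Hef; injection Hef as Hcos _.
  replace (2 * PI * f) with (2 * (PI * f)) in Hcos by ring.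
  rewrite cos_2a_sin in Hcos; nra.
Qed.

Lemma Cmod_e_sub1 x : Cmod (e x - 1) = 2 * Rabs (sin (PI * x)).
Proof.
  unfold Cmod, e, cexp2pi, Cminus, Cplus, Copp, RtoC; cbn [fst snd].
  pose proof (sin2_cos2 (2 * PI * x)) as Hpyth; unfold Rsqr in Hpyth.
  replace ((cos (2 * PI * x) + - (1)) ^ 2 + (sin (2 * PI * x) + - 0) ^ 2)
    with (2 - 2 * cos (2 * (PI * x))) by (rewrite <- Rmult_assoc; simpl; nra).
  rewrite cos_2a_sin.
  replace (2 - 2 * (1 - 2 * sin (PI * x) * sin (PI * x)))
    with (Rsqr (2 * Rabs (sin (PI * x)))).
  - apply sqrt_Rsqr; pose proof (Rabs_pos (sin (PI * x))); lra.
  - unfold Rsqr; rewrite <- (Rabs_right 2) at 1 2 by lra.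
    rewrite <- !Rabs_mult, Rabs_right by nra; ring.
Qed.

Lemma sumC_geom (w : C) n :
  ((w - 1) * sumC n (fun u => Cpow w u))%C = (Cpow w n - 1)%C.
Proof.
  induction n as [|n IH]; [rewrite sumC_0; simpl; ring|].
  rewrite sumC_S, Cmult_plus_distr_l, IH, Cpow_S; ring.
Qed.

Lemma sumC_e_orthogonality (n : nat) (m : Z) : (0 < n)%nat ->
  sumC n (fun u => e (INR u * IZR m / INR n)) =
  if (m mod Z.of_nat n =? 0)%Z then RtoC (INR n) else 0%C.
Proof.
  intros Hn; assert (HnR : 0 < INR n) by (apply lt_0_INR; lia).
  set (w := e (IZR m / INR n)).
  rewrite (sumC_ext _ _ (fun u => Cpow w u)).
  2:{ intros u _; unfold w; rewrite e_pow; f_equal; field; lra. }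
  assert (Hwn : Cpow w n = 1%C).
  { unfold w; rewrite e_pow.
    replace (INR n * (IZR m / INR n)) with (IZR m) by (field; lra); apply e_IZR. }
  destruct (Z.eqb_spec (m mod Z.of_nat n) 0) as [Hd|Hd].
  - assert (Hw1 : w = 1%C).
    { apply Z.mod_divide in Hd as [q ->]; [|lia].
      unfold w; rewrite mult_IZR, <- INR_IZR_INZ.
      replace (IZR q * INR n / INR n) with (IZR q) by (field; lra); apply e_IZR. }
    rewrite (sumC_ext _ _ (fun _ => RtoC 1)), sumC_RtoC, rsum_const.
    + f_equal; ring.
    + intros; rewrite Hw1; apply Cpow_1_l.
  - assert (Hw1 : (w - 1)%C <> 0%C).
    { intros Hw1; assert (Hw : w = 1%C) by (rewrite <- (Cplus_0_l 1), <- Hw1; ring).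
      apply e_eq1 in Hw as [z Hz]; apply Hd, Z.mod_divide; [lia|]; exists z.
      apply eq_IZR; rewrite mult_IZR, <- INR_IZR_INZ.
      apply (Rmult_eq_reg_r (/ INR n)); [rewrite <- Hz; field; lra|].
      apply Rinv_neq_0_compat; lra. }
    replace (sumC n (fun u => Cpow w u))
      with (/ (w - 1) * ((w - 1) * sumC n (fun u => Cpow w u)))%C by (field; exact Hw1).
    rewrite sumC_geom, Hwn; ring.
Qed.

Lemma Cmod_sumC_geom_e K phi x : e x <> 1%C ->
  Cmod (sumC K (fun k => e (phi + INR k * x))) <= 2 / Cmod (e x - 1).
Proof.
  intros Hx.
  assert (Hnz : 0 < Cmod (e x - 1)).
  { apply Cmod_gt_0; intros H; apply Hx.
    rewrite <- (Cplus_0_l 1), <- H; ring. }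
  rewrite (sumC_ext _ _ (fun k => e phi * Cpow (e x) k)%C).
  2:{ intros; rewrite e_pow, e_add; reflexivity. }
  rewrite <- sumC_scal_l, Cmod_mult, Cmod_e, Rmult_1_l.
  apply (Rmult_le_reg_l (Cmod (e x - 1))); [exact Hnz|].
  rewrite <- Cmod_mult, sumC_geom.
  replace (Cmod (e x - 1) * (2 / Cmod (e x - 1))) with 2 by (field; lra).
  eapply Rle_trans; [apply Cmod_triangle|].
  rewrite e_pow, Cmod_e, Cmod_opp, Cmod_1; lra.
Qed.

Lemma sin_ge_third y : 0 <= y <= PI / 2 -> y / 3 <= sin y.
Proof.
  intros Hy; pose proof PI_4; pose proof PI2_1.
  destruct (sin_bound y 0 ltac:(lra) ltac:(lra)) as [Hb _].
  unfold sin_approx in Hb; simpl in Hb; unfold sin_term in Hb; simpl in Hb.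
  assert (y * y <= 4) by nra; nra.
Qed.

Lemma sin_PI_lower_bound x : 0 <= x <= 1 -> 2 / 3 * Rmin x (1 - x) <= sin (PI * x).
Proof.
  intros Hx; pose proof PI2_1.
  destruct (Rle_dec x (1 / 2)).
  - rewrite Rmin_left by lra; pose proof (sin_ge_third (PI * x) ltac:(nra)); nra.
  - rewrite Rmin_right by lra.
    replace (PI * x) with (PI - PI * (1 - x)) by ring; rewrite sin_PI_x.
    pose proof (sin_ge_third (PI * (1 - x)) ltac:(nra)); nra.
Qed.

Lemma Cmod_sumC_e_window K (c : Z) (h M : nat) : (0 < h < M)%nat ->
  Cmod (sumC K (fun k => e (- INR h * (IZR c + INR k) / INR M)))
  <= 3 / 2 * INR M * (1 / INR h + 1 / INR (M - h)).
Proof.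
  intros Hh.
  assert (HhR : 0 < INR h) by (apply lt_0_INR; lia).
  assert (HhM : INR h < INR M) by (apply lt_INR; lia).
  rewrite minus_INR by lia.
  set (x := INR h / INR M).
  assert (Hx : 0 < x < 1).
  { unfold x; split; [apply Rdiv_lt_0_compat; lra|].
    apply (Rmult_lt_reg_r (INR M)); [lra|]; field_simplify; lra. }
  assert (Hsin : 2 / 3 * Rmin x (1 - x) <= sin (PI * x)) by (apply sin_PI_lower_bound; lra).
  assert (Hmin : 0 < Rmin x (1 - x)) by (apply Rmin_glb_lt; lra).
  assert (Hex : Cmod (e (- x) - 1) = 2 * sin (PI * x)).
  { rewrite Cmod_e_sub1, Ropp_mult_distr_r_reverse, sin_neg, Rabs_Ropp, Rabs_right; lra. }
  rewrite (sumC_ext _ _ (fun k => e (- INR h * IZR c / INR M + INR k * - x))).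
  2:{ intros; f_equal; unfold x; field; lra. }
  eapply Rle_trans.
  { apply Cmod_sumC_geom_e; intros H; rewrite H in Hex.
    unfold Cminus in Hex; rewrite Cplus_opp_r, Cmod_0 in Hex; lra. }
  rewrite Hex.
  apply (Rle_trans _ (1 / (2 / 3 * Rmin x (1 - x)))).
  { replace (2 / (2 * sin (PI * x))) with (1 / sin (PI * x)) by (field; lra).
    apply Rmult_le_compat_l; [lra|]; apply Rinv_le_contravar; lra. }
  assert (0 < 1 / INR h) by (apply Rdiv_lt_0_compat; lra).
  assert (0 < 1 / (INR M - INR h)) by (apply Rdiv_lt_0_compat; lra).
  unfold Rmin; destruct (Rle_dec x (1 - x)); unfold x.
  - replace (1 / (2 / 3 * (INR h / INR M))) with (3 / 2 * INR M * (1 / INR h)) by (field; lra).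
    nra.
  - replace (1 / (2 / 3 * (1 - INR h / INR M)))
      with (3 / 2 * INR M * (1 / (INR M - INR h))) by (field; lra).
    nra.
Qed.

Definition harmonic (m : nat) : R := rsum m (fun i => 1 / INR (S i)).

Lemma harmonic_le_ln m : (1 <= m)%nat -> harmonic m <= 1 + ln (INR m).
Proof.
  induction m as [|m IH]; intros Hm; [lia|].
  destruct (Nat.eq_dec m 0) as [->|Hm0]; [unfold harmonic; simpl; rewrite ln_1; lra|].
  unfold harmonic in *; cbn [rsum]; specialize (IH ltac:(lia)).
  assert (HmR : 0 < INR m) by (apply lt_0_INR; lia).
  rewrite S_INR.
  (* [ln (1 - u) <= - u] with [u = 1 / (m + 1)] *)
  assert (Hstep : 1 / (INR m + 1) <= ln (INR m + 1) - ln (INR m)).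
  { pose proof (exp_ineq1_le (ln (INR m / (INR m + 1)))) as Hexp.
    rewrite exp_ln in Hexp by (apply Rdiv_lt_0_compat; lra).
    rewrite ln_div in Hexp by lra.
    replace (INR m / (INR m + 1)) with (1 - 1 / (INR m + 1)) in Hexp by (field; lra).
    lra. }
  lra.
Qed.

(** * A quadratic exponential sum *)

Lemma prime_ge2 p : prime (Z.of_nat p) -> (2 <= p)%nat.
Proof. intros [Hp _]; lia. Qed.

Lemma prime_not_divide_diff (p : nat) (d : Z) l l' :
  prime (Z.of_nat p) -> ~ (Z.of_nat p | d)%Z -> (l < p)%nat -> (l' < p)%nat -> l <> l' ->
  ~ (Z.of_nat p | d * (Z.of_nat l - Z.of_nat l'))%Z.
Proof.
  intros Hp Hd Hl Hl' Hll' Hdiv.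
  apply (prime_mult _ Hp) in Hdiv as [Hdiv|[k Hk]]; [exact (Hd Hdiv)|].
  destruct (Z_le_gt_dec k 0); destruct (Z_le_gt_dec k (-1)); nia.
Qed.

(* Expanding the square, the sum over [u] of the cross terms vanishes by orthogonality
   since [p] does not divide [d (l - l')]. *)
Lemma rsum_sqr_Cmod_sumC_e (p : nat) (d : Z) (phi : R) :
  prime (Z.of_nat p) -> ~ (Z.of_nat p | d)%Z ->
  rsum p (fun u => Cmod (sumC p (fun l => e (INR l * (IZR d * INR u / INR p + phi)))) ^ 2)
  = INR p ^ 2.
Proof.
  intros Hp Hd; pose proof (prime_ge2 p Hp) as Hp2.
  assert (HpR : 0 < INR p) by (apply lt_0_INR; lia).
  apply RtoC_inj; rewrite <- sumC_RtoC.
  rewrite (sumC_ext _ _ (fun u => sumC p (fun l => sumC p (fun l' =>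
      e ((INR l - INR l') * phi)
      * e (INR u * IZR (d * (Z.of_nat l - Z.of_nat l')) / INR p))))%C).
  2:{ intros u _; rewrite Cmod2_conj, sumC_conj, sumC_mult.
      apply sumC_ext; intros l _; apply sumC_ext; intros l' _.
      rewrite <- e_opp, <- !e_add; f_equal.
      rewrite mult_IZR, minus_IZR, <- !INR_IZR_INZ; field; lra. }
  rewrite sumC_swap, (sumC_ext _ _ (fun _ => RtoC (INR p))).
  { rewrite sumC_RtoC, rsum_const; f_equal; ring. }
  intros l Hl; rewrite sumC_swap.
  rewrite (sumC_ext _ _ (fun l' => if Nat.eqb l l' then RtoC (INR p) else 0%C)).
  { exact (sumC_delta p l (fun _ => RtoC (INR p)) Hl). }
  intros l' Hl'; rewrite <- sumC_scal_l, sumC_e_orthogonality by lia.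
  destruct (Nat.eqb_spec l l') as [<-|Hll'].
  - rewrite Z.sub_diag, Z.mul_0_r, Zmod_0_l, Rminus_diag, Rmult_0_l, e_0; simpl; ring.
  - replace ((d * (Z.of_nat l - Z.of_nat l')) mod Z.of_nat p =? 0)%Z with false; [ring|].
    symmetry; apply Z.eqb_neq; intros Hm; apply Z.mod_divide in Hm; [|lia].
    exact (prime_not_divide_diff p d l l' Hp Hd Hl Hl' Hll' Hm).
Qed.

(* For fixed [l1] the sum over [l0] and [l2] factors into two sums of the form of the
   previous lemma, and AM-GM bounds the product by the mean of their squares. *)
Lemma Cmod_sumC_digit_phase (p : nat) (alpha h : Z) (tau : R) :
  prime (Z.of_nat p) -> ~ (Z.of_nat p | alpha)%Z -> ~ (Z.of_nat p | h)%Z ->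
  Cmod (sumC p (fun l2 => sumC p (fun l1 => sumC p (fun l0 =>
     e (IZR h * (IZR alpha * INR l1 * INR (l0 + l2) / INR p
                 + INR (l0 + p * (l1 + p * l2)) * tau))))))
  <= INR p ^ 2.
Proof.
  intros Hp Ha Hh; pose proof (prime_ge2 p Hp) as Hp2.
  assert (HpR : 0 < INR p) by (apply lt_0_INR; lia).
  assert (Hd : ~ (Z.of_nat p | h * alpha)%Z) by (intros H; apply (prime_mult _ Hp) in H; tauto).
  set (A u := Cmod (sumC p (fun l0 =>
                e (INR l0 * (IZR (h * alpha) * INR u / INR p + IZR h * tau))))).
  set (B u := Cmod (sumC p (fun l2 =>
                e (INR l2 * (IZR (h * alpha) * INR u / INR p + IZR h * (INR p * INR p) * tau))))).
  rewrite sumC_swap.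
  rewrite (sumC_ext _ _ (fun l1 => e (IZR h * INR p * INR l1 * tau)
     * (sumC p (fun l0 => e (INR l0 * (IZR (h * alpha) * INR l1 / INR p + IZR h * tau)))
      * sumC p (fun l2 => e (INR l2 * (IZR (h * alpha) * INR l1 / INR p
                                      + IZR h * (INR p * INR p) * tau)))))%C).
  2:{ intros l1 _; rewrite sumC_mult, sumC_scal_l, sumC_swap.
      apply sumC_ext; intros l2 _; rewrite sumC_scal_l; apply sumC_ext; intros l0 _.
      rewrite <- !e_add; f_equal.
      rewrite mult_IZR; repeat rewrite ?plus_INR, ?mult_INR; field; lra. }
  eapply Rle_trans; [apply Cmod_sumC|].
  apply (Rle_trans _ (rsum p (fun u => / 2 * A u ^ 2 + / 2 * B u ^ 2))).
  - apply rsum_le; intros u _; rewrite !Cmod_mult, Cmod_e.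
    fold (A u) (B u); pose proof (pow2_ge_0 (A u - B u)); nra.
  - rewrite rsum_plus, <- !rsum_scal_l; unfold A, B.
    rewrite !rsum_sqr_Cmod_sumC_e by assumption; lra.
Qed.

(** * Counting residues in windows *)

Definition ind_mod (M : nat) (m : Z) : R := if (m mod Z.of_nat M =? 0)%Z then 1 else 0.

Lemma ind_mod_bounds M m : 0 <= ind_mod M m <= 1.
Proof. unfold ind_mod; destruct (_ =? _)%Z; lra. Qed.

Lemma ind_mod_fourier (M : nat) (m : Z) : (0 < M)%nat ->
  RtoC (INR M * ind_mod M m) = sumC M (fun h => e (INR h * IZR m / INR M)).
Proof.
  intros HM; rewrite sumC_e_orthogonality by exact HM; unfold ind_mod.
  destruct (_ =? _)%Z; f_equal; ring.
Qed.

Lemma rsum_indicator_le1 K (P : nat -> bool) :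
  (forall k1 k2, (k1 < K)%nat -> (k2 < K)%nat -> P k1 = true -> P k2 = true -> k1 = k2) ->
  rsum K (fun k => if P k then 1 else 0) <= 1.
Proof.
  induction K as [|K IH]; intros Huniq; simpl; [lra|].
  destruct (P K) eqn:HK.
  - rewrite rsum_eq0; [lra|]; intros i Hi; destruct (P i) eqn:Hi'; [|reflexivity].
    specialize (Huniq i K ltac:(lia) ltac:(lia) Hi' HK); lia.
  - enough (rsum K (fun k => if P k then 1 else 0) <= 1) by lra.
    apply IH; intros; apply Huniq; auto; lia.
Qed.

Lemma ind_mod_window_le1 (L K : nat) (w : Z) : (0 < L)%nat -> (K <= L)%nat ->
  rsum K (fun k => ind_mod L (w - Z.of_nat k)) <= 1.
Proof.
  intros HL HK; apply rsum_indicator_le1.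
  intros k1 k2 Hk1 Hk2 E1 E2; apply Z.eqb_eq, Z.mod_divide in E1 as [a Ha], E2 as [b Hb]; try lia.
  assert (Z.of_nat k2 - Z.of_nat k1 = (a - b) * Z.of_nat L)%Z by lia.
  destruct (Z_le_gt_dec (a - b) 0); destruct (Z_le_gt_dec (a - b) (-1)); nia.
Qed.

Lemma ind_mod_window_full (L : nat) (w : Z) : (0 < L)%nat ->
  rsum L (fun k => ind_mod L (w - Z.of_nat k)) = 1.
Proof.
  intros HL; apply Rle_antisym; [apply ind_mod_window_le1; lia|].
  pose proof (Z.mod_pos_bound w (Z.of_nat L) ltac:(lia)) as Hw.
  set (k0 := Z.to_nat (w mod Z.of_nat L)).
  eapply Rle_trans; [|apply (rsum_term_le _ _ k0); [intros; apply ind_mod_bounds|unfold k0; lia]].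
  unfold ind_mod, k0; rewrite Z2Nat.id by lia.
  rewrite Zminus_mod, Z.mod_mod, Z.sub_diag, Zmod_0_l by lia; simpl; lra.
Qed.

Lemma ind_mod_window_count (L K : nat) (w : Z) : (0 < L)%nat ->
  INR K / INR L - 1 <= rsum K (fun k => ind_mod L (w - Z.of_nat k)) <= INR K / INR L + 1.
Proof.
  intros HL; assert (HLR : 0 < INR L) by (apply lt_0_INR; lia).
  revert w; induction K as [K IH] using lt_wf_ind; intros w.
  destruct (Nat.lt_ge_cases K L) as [HKL|HKL].
  - assert (INR K / INR L <= 1).
    { apply (Rmult_le_reg_r (INR L)); [lra|].
      unfold Rdiv; rewrite Rmult_assoc, Rinv_l, Rmult_1_r, Rmult_1_l by lra.
      apply le_INR; lia. }
    assert (0 <= INR K / INR L) by (apply Rdiv_le_0_compat; [apply pos_INR|lra]).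
    pose proof (ind_mod_window_le1 L K w HL ltac:(lia)).
    assert (0 <= rsum K (fun k => ind_mod L (w - Z.of_nat k)))
      by (apply rsum_nonneg; intros; apply ind_mod_bounds).
    lra.
  - replace K with (L + (K - L))%nat by lia; rewrite rsum_app, ind_mod_window_full by exact HL.
    specialize (IH (K - L)%nat ltac:(lia) (w - Z.of_nat L)%Z).
    rewrite (rsum_ext _ _ (fun k => ind_mod L (w - Z.of_nat L - Z.of_nat k))).
    2:{ intros; f_equal; lia. }
    rewrite plus_INR, minus_INR in * by lia.
    replace ((INR L + (INR K - INR L)) / INR L) with (1 + (INR K - INR L) / INR L) by (field; lra).
    lra.
Qed.

Lemma sumC_split_multiples (p L : nat) (F : nat -> C) : (0 < p)%nat ->
  sumC (p * L) F = (sumC L (fun q => F (p * q)%nat)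
                    + sumC (p * L) (fun h => if Nat.eqb (h mod p) 0 then 0%C else F h))%C.
Proof.
  intros Hp.
  rewrite (sumC_ext _ F (fun h => (if Nat.eqb (h mod p) 0 then F h else 0%C)
                                   + (if Nat.eqb (h mod p) 0 then 0%C else F h))%C).
  2:{ intros; destruct (Nat.eqb _ _); ring. }
  rewrite sumC_plus; f_equal.
  rewrite sumC_mul_range; apply sumC_ext; intros q _.
  rewrite (sumC_ext _ _ (fun r => if Nat.eqb 0 r then F (r + p * q)%nat else 0%C)).
  { exact (sumC_delta p 0 (fun r => F (r + p * q)%nat) Hp). }
  intros r Hr; rewrite Nat.mul_comm, Nat.Div0.mod_add, Nat.mod_small by exact Hr.
  destruct (Nat.eqb_spec r 0); destruct (Nat.eqb_spec 0 r); reflexivity || lia.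
Qed.

(* The frequencies [h = p q] of the expansion modulo [p L] are those of the expansion
   modulo [L]. *)
Lemma ind_mod_mul_fourier (p L : nat) (m : Z) : (0 < p)%nat -> (0 < L)%nat ->
  RtoC (INR (p * L) * ind_mod (p * L) m)
  = (RtoC (INR L * ind_mod L m)
     + sumC (p * L) (fun h => if Nat.eqb (h mod p) 0 then 0%C
                              else e (INR h * IZR m / INR (p * L))))%C.
Proof.
  intros Hp HL.
  rewrite ind_mod_fourier, sumC_split_multiples, ind_mod_fourier by lia; f_equal.
  apply sumC_ext; intros q _; f_equal.
  rewrite !mult_INR; field; split; apply not_0_INR; lia.
Qed.

Definition window_count (M N : nat) (Y : nat -> Z) (c : Z) (K : nat) : R :=
  rsum N (fun i => rsum K (fun k => ind_mod M (Y i - c - Z.of_nat k))).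

Lemma window_count_fourier (p L N K : nat) (Y : nat -> Z) (c : Z) :
  (0 < p)%nat -> (0 < L)%nat ->
  RtoC (INR (p * L) * window_count (p * L) N Y c K - INR L * window_count L N Y c K)
  = sumC (p * L) (fun h => if Nat.eqb (h mod p) 0 then 0%C else
      (sumC N (fun i => e (INR h * IZR (Y i) / INR (p * L)))
       * sumC K (fun k => e (- INR h * (IZR c + INR k) / INR (p * L))))%C).
Proof.
  intros Hp HL; assert (HMR : 0 < INR (p * L)) by (apply lt_0_INR; lia).
  set (F := fun i k h => if Nat.eqb (h mod p) 0 then RtoC 0
                  else e (INR h * IZR (Y i - c - Z.of_nat k) / INR (p * L))).
  assert (Hrow : forall i,
    RtoC (INR (p * L) * rsum K (fun k => ind_mod (p * L) (Y i - c - Z.of_nat k)))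
    = (RtoC (INR L * rsum K (fun k => ind_mod L (Y i - c - Z.of_nat k)))
       + sumC K (fun k => sumC (p * L) (F i k)))%C).
  { intros i; rewrite !rsum_scal_l, <- !sumC_RtoC, <- sumC_plus.
    apply sumC_ext; intros k _; apply ind_mod_mul_fourier; lia. }
  unfold window_count; rewrite !rsum_scal_l, RtoC_minus, <- !sumC_RtoC.
  rewrite (sumC_ext N _ _ (fun i _ => Hrow i)), sumC_plus.
  match goal with |- (?A + ?B - ?A)%C = _ => transitivity B; [ring|] end.
  rewrite (sumC_ext N _ _ (fun i _ => sumC_swap K (p * L) (F i))), sumC_swap.
  apply sumC_ext; intros h _; unfold F; destruct (Nat.eqb (h mod p) 0).
  - apply sumC_eq0; intros; apply sumC_eq0; reflexivity.
  - rewrite sumC_mult; apply sumC_ext; intros i _; apply sumC_ext; intros k _.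
    rewrite <- e_add; f_equal; rewrite !minus_IZR, <- INR_IZR_INZ; field; lra.
Qed.

Lemma rsum_harmonic_pair M : (1 <= M)%nat ->
  rsum M (fun h => if Nat.eqb h 0 then 0 else 1 / INR h + 1 / INR (M - h))
  = 2 * harmonic (M - 1).
Proof.
  intros HM; replace M with (1 + (M - 1))%nat at 1 by lia.
  rewrite rsum_app; cbn [rsum Nat.eqb].
  rewrite (rsum_ext _ _ (fun i => 1 / INR (S i) + 1 / INR (S (M - 1 - 1 - i)))).
  2:{ intros i Hi; cbn [Nat.eqb Nat.add]; do 3 f_equal; lia. }
  rewrite rsum_plus; unfold harmonic.
  rewrite (rsum_rev (M - 1) (fun i => 1 / INR (S i))); lra.
Qed.

Lemma window_count_difference_bound (p L N K : nat) (Y : nat -> Z) (c : Z) (B : R) :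
  (2 <= p)%nat -> (1 <= L)%nat -> 0 <= B ->
  (forall h, (0 < h < p * L)%nat -> (h mod p <> 0)%nat ->
     Cmod (sumC N (fun i => e (INR h * IZR (Y i) / INR (p * L)))) <= B) ->
  Rabs (INR (p * L) * window_count (p * L) N Y c K - INR L * window_count L N Y c K)
  <= 3 * B * INR (p * L) * harmonic (p * L - 1).
Proof.
  intros Hp HL HB0 HB.
  rewrite <- Cmod_R, window_count_fourier by lia.
  eapply Rle_trans; [apply Cmod_sumC|].
  apply (Rle_trans _ (rsum (p * L) (fun h => 3 / 2 * B * INR (p * L)
           * (if Nat.eqb h 0 then 0 else 1 / INR h + 1 / INR (p * L - h))))).
  - apply rsum_le; intros h Hh.
    destruct (Nat.eqb_spec (h mod p) 0) as [Hph|Hph]; destruct (Nat.eqb_spec h 0) as [->|Hh0].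
    + rewrite Cmod_0; lra.
    + rewrite Cmod_0; apply Rmult_le_pos; [apply Rmult_le_pos; [lra|apply pos_INR]|].
      apply Rplus_le_le_0_compat; apply Rlt_le, Rdiv_lt_0_compat; try lra; apply lt_0_INR; lia.
    + rewrite Nat.Div0.mod_0_l in Hph; lia.
    + rewrite Cmod_mult.
      replace (3 / 2 * B * INR (p * L) * (1 / INR h + 1 / INR (p * L - h)))
        with (B * (3 / 2 * INR (p * L) * (1 / INR h + 1 / INR (p * L - h)))) by ring.
      apply Rmult_le_compat; try apply Cmod_ge_0; [apply HB; lia|].
      apply Cmod_sumC_e_window; lia.
  - rewrite <- rsum_scal_l, rsum_harmonic_pair by lia; lra.
Qed.

Lemma window_count_fourier_bound (p L N K : nat) (Y : nat -> Z) (c : Z) (B : R) :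
  (2 <= p)%nat -> (1 <= L)%nat ->
  (forall h, (0 < h < p * L)%nat -> (h mod p <> 0)%nat ->
     Cmod (sumC N (fun i => e (INR h * IZR (Y i) / INR (p * L)))) <= B) ->
  Rabs (window_count (p * L) N Y c K - window_count L N Y c K / INR p)
  <= 3 * B * (1 + ln (INR (p * L))).
Proof.
  intros Hp HL HB.
  assert (HMR : 0 < INR (p * L)) by (apply lt_0_INR; lia).
  assert (HB0 : 0 <= B).
  { eapply Rle_trans; [apply Cmod_ge_0|apply (HB 1%nat)]; [nia|rewrite Nat.mod_small; lia]. }
  pose proof (window_count_difference_bound p L N K Y c B Hp HL HB0 HB) as Hdiff.
  assert (Hharm : harmonic (p * L - 1) <= 1 + ln (INR (p * L))).
  { eapply Rle_trans; [apply harmonic_le_ln; nia|].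
    apply Rplus_le_compat_l, ln_le; [apply lt_0_INR; nia|apply le_INR; lia]. }
  replace (window_count (p * L) N Y c K - window_count L N Y c K / INR p)
    with ((INR (p * L) * window_count (p * L) N Y c K - INR L * window_count L N Y c K)
          / INR (p * L))
    by (rewrite mult_INR in *; field; split; apply not_0_INR; lia).
  unfold Rdiv; rewrite Rabs_mult, (Rabs_right (/ _))
    by (apply Rle_ge, Rlt_le, Rinv_0_lt_compat; lra).
  apply (Rmult_le_reg_r (INR (p * L))); [exact HMR|].
  rewrite Rmult_assoc, Rinv_l, Rmult_1_r by lra.
  assert (0 <= 3 * B * INR (p * L)) by (apply Rmult_le_pos; lra).
  apply (Rle_trans _ _ _ Hdiff); rewrite (Rmult_comm (3 * B)), <- Rmult_assoc; nra.
Qed.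

Lemma window_count_estimate (p L N K : nat) (Y : nat -> Z) (c : Z) (B : R) :
  (2 <= p)%nat -> (1 <= L)%nat ->
  (forall h, (0 < h < p * L)%nat -> (h mod p <> 0)%nat ->
     Cmod (sumC N (fun i => e (INR h * IZR (Y i) / INR (p * L)))) <= B) ->
  Rabs (window_count (p * L) N Y c K - INR N * INR K / INR (p * L))
  <= INR N / INR p + 3 * B * (1 + ln (INR (p * L))).
Proof.
  intros Hp HL HB.
  assert (HpR : 0 < INR p) by (apply lt_0_INR; lia).
  assert (HLR : 0 < INR L) by (apply lt_0_INR; lia).
  pose proof (window_count_fourier_bound p L N K Y c B Hp HL HB) as Hfourier.
  assert (Htrivial : INR N * (INR K / INR L - 1) <= window_count L N Y c K
                     <= INR N * (INR K / INR L + 1)).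
  { unfold window_count; rewrite <- !rsum_const.
    split; apply rsum_le; intros i _; apply (ind_mod_window_count L K (Y i - c)); lia. }
  apply Rabs_le_between' in Hfourier.
  apply Rabs_le_between'.
  replace (INR N * INR K / INR (p * L)) with (INR N * (INR K / INR L) / INR p)
    by (rewrite mult_INR; field; lra).
  assert (Hscale : forall x y, x <= y -> x / INR p <= y / INR p).
  { intros x y Hxy; apply Rmult_le_compat_r; [apply Rlt_le, Rinv_0_lt_compat|]; lra. }
  destruct Htrivial as [Hlo Hhi]; apply Hscale in Hlo, Hhi.
  unfold Rdiv in *; lra.
Qed.

(** * The coefficients of [Q_{0,3}] *)

Lemma cpow_Cpow (z : C) k : cpow z k = Cpow z k.
Proof. induction k as [|k IH]; simpl; [reflexivity|]; rewrite IH; reflexivity. Qed.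

Lemma Qcoef_large p xi r j m : (p ^ r <= m)%nat -> Qcoef p xi r j m = c0.
Proof.
  revert j m; induction r as [|r IH]; intros j m Hm; cbn [Qcoef].
  - destruct (Nat.eqb_spec m 0); [simpl in Hm; lia|reflexivity].
  - change csum with sumC; apply sumC_eq0; intros l Hl.
    change cmul with Cmult; change c0 with (RtoC 0); rewrite cpow_Cpow.
    destruct (Nat.leb_spec (l * p ^ r) m); [|ring].
    rewrite IH; [change c0 with (RtoC 0); ring|]; rewrite Nat.pow_succ_r' in Hm; nia.
Qed.

Lemma Qcoef_S p xi r j l m : (l < p)%nat -> (m < p ^ r)%nat ->
  Qcoef p xi (S r) j (m + l * p ^ r) = (Cpow xi (j * l) * Qcoef p xi r l m)%C.
Proof.
  intros Hl Hm; cbn [Qcoef]; change csum with sumC.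
  rewrite (sumC_ext _ _ (fun l' => if Nat.eqb l l'
                                   then (Cpow xi (j * l') * Qcoef p xi r l' m)%C else 0%C)).
  { exact (sumC_delta p l (fun l' => Cpow xi (j * l') * Qcoef p xi r l' m)%C Hl). }
  intros l' _; change cmul with Cmult; change c0 with (RtoC 0); rewrite cpow_Cpow.
  destruct (Nat.eqb_spec l l') as [<-|Hll'].
  - rewrite (proj2 (Nat.leb_le _ _)) by lia; do 2 f_equal; lia.
  - destruct (Nat.leb_spec (l' * p ^ r) (m + l * p ^ r)); [|ring].
    rewrite Qcoef_large; [change c0 with (RtoC 0); ring|].
    assert (l' < l)%nat by nia; nia.
Qed.

Lemma Qcoef_3_digits p xi l0 l1 l2 : (l0 < p)%nat -> (l1 < p)%nat -> (l2 < p)%nat ->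
  Qcoef p xi 3 0 (l0 + p * (l1 + p * l2)) = (Cpow xi (l2 * l1) * Cpow xi (l1 * l0))%C.
Proof.
  intros H0 H1 H2.
  replace (l0 + p * (l1 + p * l2))%nat with ((0 + l0 * p ^ 0) + l1 * p ^ 1 + l2 * p ^ 2)%nat
    by (simpl; lia).
  rewrite Qcoef_S, Qcoef_S, Qcoef_S by (simpl; nia); cbn [Qcoef Nat.eqb].
  rewrite Nat.mul_0_l; cbn [Cpow].
  match goal with |- ?a = ?b => change (@eq C a b) end; change Defs.c1 with (RtoC 1); ring.
Qed.

Lemma base_p_digits p i : (1 <= p)%nat -> (i < p ^ 3)%nat ->
  exists l0 l1 l2, (l0 < p)%nat /\ (l1 < p)%nat /\ (l2 < p)%nat
                   /\ i = (l0 + p * (l1 + p * l2))%nat.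
Proof.
  intros Hp Hi; replace (p ^ 3)%nat with (p * (p * p))%nat in Hi by (simpl; lia).
  exists (i mod p)%nat, (i / p mod p)%nat, (i / p / p)%nat.
  pose proof (Nat.div_mod_eq i p); pose proof (Nat.div_mod_eq (i / p) p).
  pose proof (Nat.mod_upper_bound i p ltac:(lia)).
  pose proof (Nat.mod_upper_bound (i / p) p ltac:(lia)).
  repeat split; try lia; nia.
Qed.

Lemma e_IZR_plus_eq x y : e x = e y -> exists n : Z, x = IZR n + y.
Proof.
  intros Hxy; destruct (e_eq1 (x - y)) as [n Hn]; [|exists n; lra].
  unfold Rminus; rewrite e_add, e_opp, Hxy; apply e_mul_conj.
Qed.

Section Phases.

Variables (p : nat) (xi : C) (s : nat -> R).
Hypothesis p_prime : prime (Z.of_nat p).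
Hypothesis xi_primitive : primitive_root p xi.
Hypothesis s_phase : forall j, (j < p ^ 3)%nat -> Qcoef p xi 3 0 j = cexp2pi (s j).

Lemma e_s_digits l0 l1 l2 : (l0 < p)%nat -> (l1 < p)%nat -> (l2 < p)%nat ->
  e (s (l0 + p * (l1 + p * l2))%nat) = (Cpow xi (l2 * l1) * Cpow xi (l1 * l0))%C.
Proof.
  intros H0 H1 H2; unfold e; rewrite <- s_phase, Qcoef_3_digits by (simpl; nia || assumption).
  reflexivity.
Qed.

(* The coefficient of [x^(1 + p)] is [xi] itself, which gives [xi] an argument. *)
Lemma primitive_root_exponent :
  exists alpha : Z, ~ (Z.of_nat p | alpha)%Z /\ xi = e (IZR alpha / INR p).
Proof.
  pose proof (prime_ge2 p p_prime) as Hp2.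
  assert (HpR : 0 < INR p) by (apply lt_0_INR; lia).
  set (theta := s (1 + p * (1 + p * 0))%nat).
  assert (Hxi : xi = e theta).
  { unfold theta; rewrite e_s_digits by lia; simpl; ring. }
  destruct xi_primitive as [Hxip Hxik].
  rewrite cpow_Cpow, Hxi, e_pow in Hxip; apply e_eq1 in Hxip as [alpha Halpha].
  exists alpha; split.
  - intros [q ->]; apply (Hxik 1%nat); [lia|].
    rewrite cpow_Cpow, Cpow_1_r, Hxi.
    replace theta with (IZR q) by (rewrite mult_IZR, <- INR_IZR_INZ in Halpha; nra).
    apply e_IZR.
  - rewrite Hxi; f_equal; rewrite <- Halpha; field; lra.
Qed.

Lemma s_digits : exists alpha : Z, ~ (Z.of_nat p | alpha)%Z /\
  forall l0 l1 l2, (l0 < p)%nat -> (l1 < p)%nat -> (l2 < p)%nat ->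
  exists n : Z, s (l0 + p * (l1 + p * l2))%nat
                = IZR n + IZR alpha * INR l1 * INR (l0 + l2) / INR p.
Proof.
  destruct primitive_root_exponent as [alpha [Halpha Hxi]].
  assert (HpR : 0 < INR p) by (apply lt_0_INR; pose proof (prime_ge2 p p_prime); lia).
  exists alpha; split; [exact Halpha|]; intros l0 l1 l2 H0 H1 H2.
  apply e_IZR_plus_eq; rewrite e_s_digits, Hxi, !e_pow, <- e_add by assumption.
  f_equal; rewrite plus_INR, !mult_INR; field; lra.
Qed.

End Phases.

(** * Discretisation and the bias *)

Lemma le_Int_part (z : Z) x : IZR z <= x -> (z <= Int_part x)%Z.
Proof.
  intros Hzx; destruct (base_Int_part x) as [_ Hx].
  apply Zlt_succ_le, lt_IZR; rewrite succ_IZR; lra.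
Qed.

Lemma fracR_eq (q : Z) f : 0 <= f < 1 -> fracR (IZR q + f) = f.
Proof.
  intros Hf; unfold fracR.
  rewrite <- (proj1 (Int_part_frac_part_spec (IZR q + f) q f Hf eq_refl)); ring.
Qed.

Definition ind_interval (a b x : R) : R :=
  if Rle_dec a x then if Rle_dec x b then 1 else 0 else 0.

Lemma count_in_rsum r N a b :
  INR (count_in r N a b) = rsum N (fun i => ind_interval a b (fracR (r i))).
Proof.
  unfold count_in; induction N as [|N IH]; [reflexivity|].
  rewrite seq_S, filter_app, length_app, plus_INR, IH; simpl rsum; f_equal.
  unfold ind_interval; simpl.
  destruct (Rle_dec a (fracR (r N))); destruct (Rle_dec (fracR (r N)) b); simpl; lra.
Qed.

(* A point [x] known up to [M x - Y] in [[0, D]] is counted by residues of [Y] modulo [M]: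
   an outer window of residues catches every [x] with [{x}] in [[a, b]], and an inner
   window catches only such [x]. *)
Definition outer_start (M D : nat) (a : R) : Z := (Int_part (INR M * a) - Z.of_nat D)%Z.
Definition outer_length (M D : nat) (a b : R) : nat :=
  Z.to_nat (Int_part (INR M * b) - Int_part (INR M * a) + Z.of_nat D + 1).
Definition inner_start (M : nat) (a : R) : Z := (Int_part (INR M * a) + 1)%Z.
Definition inner_length (M D : nat) (a b : R) : nat :=
  Z.to_nat (Int_part (INR M * b) - Int_part (INR M * a) - Z.of_nat D - 1).

Lemma outer_window (M D : nat) (x : R) (Y : Z) a b : (0 < M)%nat ->
  0 <= INR M * x - IZR Y <= INR D ->
  ind_interval a b (fracR x)
  <= rsum (outer_length M D a b) (fun k => ind_mod M (Y - outer_start M D a - Z.of_nat k)).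
Proof.
  intros HM Hd; assert (HMR : 0 < INR M) by (apply lt_0_INR; lia).
  assert (Hnn : 0 <= rsum (outer_length M D a b)
                         (fun k => ind_mod M (Y - outer_start M D a - Z.of_nat k)))
    by (apply rsum_nonneg; intros; apply ind_mod_bounds).
  unfold ind_interval; destruct (Rle_dec a (fracR x)) as [Ha|]; [|lra].
  destruct (Rle_dec (fracR x) b) as [Hb|]; [|lra].
  set (q := Int_part x); set (z := (Y - Z.of_nat M * q)%Z).
  assert (Hz : IZR z = INR M * fracR x - (INR M * x - IZR Y)).
  { unfold z, fracR; rewrite minus_IZR, mult_IZR, <- INR_IZR_INZ; fold q; ring. }
  assert (Hza : (outer_start M D a <= z)%Z).
  { unfold outer_start; apply le_IZR; rewrite minus_IZR, <- INR_IZR_INZ.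
    destruct (base_Int_part (INR M * a)).
    assert (INR M * a <= INR M * fracR x) by (apply Rmult_le_compat_l; lra); lra. }
  assert (Hzb : (z <= Int_part (INR M * b))%Z).
  { apply le_Int_part; assert (INR M * fracR x <= INR M * b) by (apply Rmult_le_compat_l; lra).
    lra. }
  eapply Rle_trans; [|apply (rsum_term_le _ _ (Z.to_nat (z - outer_start M D a)))].
  - unfold ind_mod; rewrite Z2Nat.id by lia.
    replace (Y - outer_start M D a - (z - outer_start M D a))%Z with (q * Z.of_nat M)%Z
      by (unfold z; ring).
    rewrite Z_mod_mult; simpl; lra.
  - intros; apply ind_mod_bounds.
  - unfold outer_length, outer_start in *; lia.
Qed.

Lemma inner_window_hit (M D : nat) (x : R) (Y : Z) a b k : (0 < M)%nat ->
  0 <= INR M * x - IZR Y <= INR D -> 0 <= a -> b <= 1 ->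
  (k < inner_length M D a b)%nat -> ind_mod M (Y - inner_start M a - Z.of_nat k) = 1 ->
  a <= fracR x <= b.
Proof.
  intros HM Hd Ha Hb Hk Hind; assert (HMR : 0 < INR M) by (apply lt_0_INR; lia).
  unfold ind_mod in Hind.
  destruct (Z.eqb_spec ((Y - inner_start M a - Z.of_nat k) mod Z.of_nat M) 0) as [Hq|]; [|lra].
  apply Z.mod_divide in Hq as [q Hq]; [|lia].
  set (z := (inner_start M a + Z.of_nat k)%Z).
  set (f := (IZR z + (INR M * x - IZR Y)) / INR M).
  destruct (base_Int_part (INR M * a)); destruct (base_Int_part (INR M * b)).
  assert (Hza : INR M * a < IZR z).
  { unfold z, inner_start; rewrite !plus_IZR, <- INR_IZR_INZ; pose proof (pos_INR k); lra. }
  assert (Hzb : IZR z + INR D <= INR M * b - 1).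
  { assert (IZR (z + Z.of_nat D) <= IZR (Int_part (INR M * b) - 1))
      by (apply IZR_le; unfold z, inner_start, inner_length in *; lia).
    rewrite plus_IZR, minus_IZR, <- INR_IZR_INZ in *; lra. }
  assert (Hf : a < f < b).
  { unfold f; split; [apply (Rmult_lt_reg_l (INR M))|apply (Rmult_lt_reg_r (INR M))];
      try lra; field_simplify; lra. }
  replace x with (IZR q + f).
  - rewrite fracR_eq by lra; lra.
  - unfold f; replace (IZR Y) with (IZR q * INR M + IZR z)
      by (rewrite INR_IZR_INZ, <- mult_IZR, <- plus_IZR; f_equal; unfold z; lia).
    field; lra.
Qed.

Lemma inner_window (M D : nat) (x : R) (Y : Z) a b : (0 < M)%nat ->
  0 <= INR M * x - IZR Y <= INR D -> 0 <= a -> b <= 1 ->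
  rsum (inner_length M D a b) (fun k => ind_mod M (Y - inner_start M a - Z.of_nat k))
  <= ind_interval a b (fracR x).
Proof.
  intros HM Hd Ha Hb; assert (HMR : 0 < INR M) by (apply lt_0_INR; lia).
  assert (Hmiss : ~ (a <= fracR x <= b) ->
    rsum (inner_length M D a b) (fun k => ind_mod M (Y - inner_start M a - Z.of_nat k)) = 0).
  { intros Hx; apply rsum_eq0; intros k Hk.
    destruct (ind_mod_bounds M (Y - inner_start M a - Z.of_nat k)).
    unfold ind_mod in *; destruct (_ =? 0)%Z eqn:E; [|reflexivity].
    exfalso; apply Hx, (inner_window_hit M D x Y a b k); try assumption.
    unfold ind_mod; rewrite E; reflexivity. }
  unfold ind_interval; destruct (Rle_dec a (fracR x)) as [Hxa|Hxa];
    [destruct (Rle_dec (fracR x) b) as [Hxb|Hxb]|]; try (right; apply Hmiss; lra).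
  apply ind_mod_window_le1; [exact HM|].
  assert (Hfb : IZR (Int_part (INR M * b)) <= IZR (Z.of_nat M)).
  { rewrite <- INR_IZR_INZ; destruct (base_Int_part (INR M * b)); nra. }
  apply le_IZR in Hfb; pose proof (le_Int_part 0 (INR M * a) ltac:(simpl; nra)).
  unfold inner_length; lia.
Qed.

Lemma outer_length_le (M D : nat) a b : a <= b ->
  INR (outer_length M D a b) <= INR M * (b - a) + INR D + 2.
Proof.
  intros Hab; pose proof (pos_INR M).
  assert (Hmon : INR M * a <= INR M * b) by (apply Rmult_le_compat_l; lra).
  destruct (base_Int_part (INR M * a)); destruct (base_Int_part (INR M * b)).
  pose proof (le_Int_part (Int_part (INR M * a)) (INR M * b) ltac:(lra)).
  unfold outer_length; rewrite (INR_IZR_INZ (Z.to_nat _)), Z2Nat.id by lia.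
  rewrite !plus_IZR, minus_IZR, <- INR_IZR_INZ; simpl; lra.
Qed.

Lemma inner_length_ge (M D : nat) a b :
  INR M * (b - a) - INR D - 2 <= INR (inner_length M D a b).
Proof.
  destruct (base_Int_part (INR M * a)); destruct (base_Int_part (INR M * b)).
  unfold inner_length; pose proof (pos_INR (Z.to_nat (Int_part (INR M * b)
    - Int_part (INR M * a) - Z.of_nat D - 1))).
  destruct (Z_le_gt_dec 0 (Int_part (INR M * b) - Int_part (INR M * a) - Z.of_nat D - 1))
    as [Hpos|Hneg].
  - rewrite (INR_IZR_INZ (Z.to_nat _)), Z2Nat.id by exact Hpos.
    rewrite !minus_IZR, <- INR_IZR_INZ; simpl; lra.
  - apply Z.gt_lt, IZR_lt in Hneg; rewrite !minus_IZR, <- INR_IZR_INZ in Hneg; simpl in Hneg.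
    lra.
Qed.

Section Discrepancy.

Variables (p : nat) (alpha : Z) (s : nat -> R) (t : R).
Hypothesis p_prime : prime (Z.of_nat p).
Hypothesis alpha_coprime : ~ (Z.of_nat p | alpha)%Z.
Hypothesis s_digits : forall l0 l1 l2, (l0 < p)%nat -> (l1 < p)%nat -> (l2 < p)%nat ->
  exists n : Z, s (l0 + p * (l1 + p * l2))%nat
                = IZR n + IZR alpha * INR l1 * INR (l0 + l2) / INR p.

Local Notation N := (p ^ 3)%nat.
Local Notation L := (N * N)%nat.
Local Notation M := (p * L)%nat.

(* [t] is replaced by a rational with denominator [L]; this moves each [s i + i t]
   by less than [N / L], i.e. by at most [p N] steps of [1 / M]. *)
Definition t_approx : R := IZR (Int_part (INR L * t)) / INR L.
Definition grid_index (i : nat) : Z := Int_part (INR M * (s i + INR i * t_approx)).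

Lemma p_ge2 : (2 <= p)%nat.
Proof. exact (prime_ge2 p p_prime). Qed.

Lemma s_mul_p_integer i : (i < N)%nat -> exists z : Z, INR p * s i = IZR z.
Proof.
  intros Hi; pose proof p_ge2; assert (HpR : 0 < INR p) by (apply lt_0_INR; lia).
  destruct (base_p_digits p i ltac:(lia) Hi) as (l0 & l1 & l2 & H0 & H1 & H2 & ->).
  destruct (s_digits l0 l1 l2 H0 H1 H2) as [n ->].
  exists (Z.of_nat p * n + alpha * Z.of_nat l1 * Z.of_nat (l0 + l2))%Z.
  rewrite plus_IZR, !mult_IZR, <- !INR_IZR_INZ; field; lra.
Qed.

Lemma grid_index_eq i : (i < N)%nat -> IZR (grid_index i) = INR M * (s i + INR i * t_approx).
Proof.
  intros Hi; destruct (s_mul_p_integer i Hi) as [z Hz]; pose proof p_ge2.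
  assert (HLR : 0 < INR L) by (apply lt_0_INR; nia).
  set (w := (Z.of_nat L * z + Z.of_nat i * Int_part (INR L * t) * Z.of_nat p)%Z).
  assert (Hw : INR M * (s i + INR i * t_approx) = IZR w).
  { unfold w; rewrite plus_IZR, !mult_IZR, <- !INR_IZR_INZ, <- Hz; unfold t_approx.
    rewrite mult_INR; field; lra. }
  unfold grid_index; rewrite Hw, <- (Int_part_spec (IZR w) w) by lra; reflexivity.
Qed.

Lemma grid_offset i : (i < N)%nat ->
  0 <= INR M * (s i + INR i * t) - IZR (grid_index i) <= INR (p * N).
Proof.
  intros Hi; pose proof p_ge2.
  assert (HLR : 0 < INR L) by (apply lt_0_INR; nia).
  assert (HpR : 0 < INR p) by (apply lt_0_INR; lia).
  assert (HiN : INR i <= INR N) by (apply le_INR; lia).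
  assert (Ht : 0 <= INR L * (t - t_approx) <= 1).
  { destruct (base_Int_part (INR L * t)); unfold t_approx.
    replace (INR L * (t - IZR (Int_part (INR L * t)) / INR L))
      with (INR L * t - IZR (Int_part (INR L * t))) by (field; lra); lra. }
  rewrite grid_index_eq by exact Hi.
  replace (INR M * (s i + INR i * t) - INR M * (s i + INR i * t_approx))
    with (INR p * (INR i * (INR L * (t - t_approx)))) by (rewrite (mult_INR p); ring).
  pose proof (pos_INR i).
  assert (0 <= INR i * (INR L * (t - t_approx)) <= INR N) by (split; nra).
  rewrite (mult_INR p N); split; [|apply Rmult_le_compat_l]; nra.
Qed.

(* By [s_digits], [h] times the grid point is, modulo 1, the phase of
   [Cmod_sumC_digit_phase]. *)
Lemma Cmod_sumC_grid_index h : (0 < h < M)%nat -> (h mod p <> 0)%nat ->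
  Cmod (sumC N (fun i => e (INR h * IZR (grid_index i) / INR M))) <= INR p ^ 2.
Proof.
  intros Hh Hhp; pose proof p_ge2.
  assert (HMR : 0 < INR M) by (apply lt_0_INR; nia).
  assert (HpR : 0 < INR p) by (apply lt_0_INR; lia).
  replace (p ^ 3)%nat with (p * (p * p))%nat at 1 by (simpl; lia).
  rewrite sumC_mul_range, sumC_mul_range.
  rewrite (sumC_ext _ _ (fun l2 => sumC p (fun l1 => sumC p (fun l0 =>
     e (IZR (Z.of_nat h) * (IZR alpha * INR l1 * INR (l0 + l2) / INR p
                            + INR (l0 + p * (l1 + p * l2)) * t_approx)))))).
  { apply Cmod_sumC_digit_phase; [exact p_prime|exact alpha_coprime|].
    intros [k Hk]; apply Hhp, Nat2Z.inj; rewrite Nat2Z.inj_mod, Hk, Z_mod_mult; reflexivity. }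
  intros l2 Hl2; apply sumC_ext; intros l1 Hl1; apply sumC_ext; intros l0 Hl0.
  rewrite grid_index_eq by (simpl; nia).
  destruct (s_digits l0 l1 l2 Hl0 Hl1 Hl2) as [n ->].
  replace (INR h * (INR M * (IZR n + IZR alpha * INR l1 * INR (l0 + l2) / INR p
                             + INR (l0 + p * (l1 + p * l2)) * t_approx)) / INR M)
    with (IZR (Z.of_nat h * n) + IZR (Z.of_nat h) * (IZR alpha * INR l1 * INR (l0 + l2) / INR p
                                 + INR (l0 + p * (l1 + p * l2)) * t_approx))
    by (rewrite mult_IZR, <- !INR_IZR_INZ; field; lra).
  rewrite e_add, e_IZR; ring.
Qed.

Lemma grid_slack : INR N / INR M * (INR (p * N) + 2) <= 2.
Proof.
  pose proof p_ge2.
  assert (HpR : 2 <= INR p) by (change 2 with (INR 2); apply le_INR; lia).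
  assert (HN1 : 1 <= INR N) by (change 1 with (INR 1); apply le_INR; simpl; nia).
  rewrite !mult_INR.
  replace (INR N / (INR p * (INR N * INR N)) * (INR p * INR N + 2))
    with (1 + 2 / (INR p * INR N)) by (field; nra).
  assert (/ (INR p * INR N) <= / 2) by (apply Rinv_le_contravar; nra).
  unfold Rdiv; lra.
Qed.

Lemma bias_bound a b : 0 <= a -> a <= b -> b <= 1 ->
  Rabs (INR (count_in (fun i => s i + INR i * t) N a b) - INR N * (b - a))
  <= 2 + INR N / INR p + 3 * INR p ^ 2 * (1 + ln (INR M)).
Proof.
  intros Ha Hab Hb; pose proof p_ge2 as Hp; pose proof grid_slack as Hslack.
  assert (HMR : 0 < INR M) by (apply lt_0_INR; simpl; nia).
  assert (HNM : 0 <= INR N / INR M) by (apply Rdiv_le_0_compat; [apply pos_INR|lra]).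
  assert (Hmain : forall K, INR N * INR K / INR M
                  = INR N * (b - a) + INR N / INR M * (INR K - INR M * (b - a))).
  { intros K; field; lra. }
  pose proof (fun c K => window_count_estimate p L N K grid_index c (INR p ^ 2) Hp
                 ltac:(simpl; nia) Cmod_sumC_grid_index) as Hwin.
  rewrite count_in_rsum; apply Rabs_le_between'; split.
  - pose proof (inner_length_ge M (p * N) a b) as HK.
    set (K := inner_length M (p * N) a b) in *.
    assert (Hcount : window_count M N grid_index (inner_start M a) K
                     <= rsum N (fun i => ind_interval a b (fracR (s i + INR i * t)))).
    { apply rsum_le; intros i Hi; apply inner_window; try assumption; [nia|].
      apply grid_offset, Hi. }
    specialize (Hwin (inner_start M a) K); apply Rabs_le_between' in Hwin.
    assert (INR N / INR M * (- INR (p * N) - 2) <= INR N / INR M * (INR K - INR M * (b - a)))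
      by (apply Rmult_le_compat_l; lra).
    rewrite Hmain in Hwin; lra.
  - pose proof (outer_length_le M (p * N) a b Hab) as HK.
    set (K := outer_length M (p * N) a b) in *.
    assert (Hcount : rsum N (fun i => ind_interval a b (fracR (s i + INR i * t)))
                     <= window_count M N grid_index (outer_start M (p * N) a) K).
    { apply rsum_le; intros i Hi; apply outer_window; [nia|apply grid_offset, Hi]. }
    specialize (Hwin (outer_start M (p * N) a) K); apply Rabs_le_between' in Hwin.
    assert (INR N / INR M * (INR K - INR M * (b - a)) <= INR N / INR M * (INR (p * N) + 2))
      by (apply Rmult_le_compat_l; lra).
    rewrite Hmain in Hwin; lra.
Qed.

End Discrepancy.

Lemma bias_error_le (p : nat) : (2 <= p)%nat ->
  2 + INR (p ^ 3) / INR p + 3 * INR p ^ 2 * (1 + ln (INR (p * (p ^ 3 * p ^ 3))))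
  <= 10 * Rpower (INR (p ^ 3)) (2 / 3) * ln (INR (p ^ 3)).
Proof.
  intros Hp.
  assert (HpR : 2 <= INR p) by (change 2 with (INR 2); apply le_INR; lia).
  assert (Hln2 : / 2 < ln (INR p)) by (eapply Rlt_le_trans; [apply ln_lt_2|apply ln_le; lra]).
  replace (INR (p * (p ^ 3 * p ^ 3))) with (INR p ^ 7) by (rewrite !mult_INR, pow_INR; ring).
  rewrite pow_INR, !ln_pow by lra.
  replace (Rpower (INR p ^ 3) (2 / 3)) with (INR p ^ 2).
  2:{ symmetry; rewrite <- Rpower_pow, Rpower_mult, <- Rpower_pow by lra; f_equal; simpl; field. }
  replace (INR p ^ 3 / INR p) with (INR p ^ 2) by (field; lra).
  assert (Hp4 : 4 <= INR p ^ 2) by nra.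
  assert (INR p ^ 2 * / 2 <= INR p ^ 2 * ln (INR p)) by (apply Rmult_le_compat_l; lra).
  simpl INR; nra.
Qed.

Theorem corollary4p4 :
  exists C : R, 0 < C /\
  forall (p : nat) (xi : cpx),
    prime (Z.of_nat p) -> primitive_root p xi ->
    forall s : nat -> R,
      (forall j : nat, (j < p ^ 3)%nat ->
         0 <= s j < 1 /\ Qcoef p xi 3 0 j = cexp2pi (s j)) ->
      forall t : R,
        bias_le (fun i => s i + INR i * t) (p ^ 3)
          (C * Rpower (INR (p ^ 3)) (2 / 3) * ln (INR (p ^ 3))).
Proof.
  exists 10; split; [lra|].
  intros p xi Hp Hxi s Hs t a b Ha Hab Hb.
  destruct (s_digits p xi s Hp Hxi (fun j Hj => proj2 (Hs j Hj))) as [alpha [Halpha Hdigits]].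
  eapply Rle_trans; [exact (bias_bound p alpha s t Hp Halpha Hdigits a b Ha Hab Hb)|].
  exact (bias_error_le p (prime_ge2 p Hp)).
Qed.
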